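(* Let $k$ be a squarefree positive integer with at most two distinct prime factors. Then every $n\in\mathbb N$ with $\kappa(n)=k$ satisfies $h(\Phi^*_n)=1$; that is, $\{h(\Phi^*_n):\kappa(n)=k\}=\{1\}$.
   Context: $d\mid\mid n$ means $d\mid n$ and $\gcd(d,n/d)=1$; $(j,n)_*=\max\{d: d\mid j,\ d\mid\mid n\}$; $\Phi^*_n(x)=\prod_{1\le j\le n,\ (j,n)_*=1}(x-e^{2\pi i j/n})$ (a polynomial with integer coefficients). $\kappa(n)=\prod_{p\mid n}p$ is the squarefree kernel. The height $h(f)$ of a polynomial $f$ is the maximum absolute value of its coefficients. *)

From HB Require Import structures.
From mathcomp Require Import all_boot all_order all_algebra all_field.
Set Implicit Arguments. Unset Strict Implicit. Unset Printing Implicit Defensive.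
Import Order.TTheory GRing.Theory Num.Theory.
Local Open Scope ring_scope.

Definition unitary_div (d n : nat) : bool := (d %| n)%N && coprime d (n %/ d).

Definition ugcd (j n : nat) : nat :=
  \max_(0 <= d < n.+1 | (d %| j)%N && unitary_div d n) d.

Definition kappa (n : nat) : nat := \prod_(p <- primes n) p.

Definition squarefree (k : nat) : Prop := forall p, prime p -> ~~ (p ^ 2 %| k)%N.

Definition zeta (n : nat) : algC := let: exist z _ := C_prim_root_exists (ltn0Sn n.-1) in z.

Definition Phistar (n : nat) : {poly algC} :=
  \prod_(1 <= j < n.+1 | ugcd j n == 1%N) ('X - (zeta n ^+ j)%:P).

Definition height_eq (f : {poly algC}) (h : algC) : Prop :=
  (forall i, `|f`_i| <= h) /\ (exists i, `|f`_i| = h).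

From HB Require Import structures.
From mathcomp Require Import all_boot all_order all_algebra all_field.
From mathcomp Require Import zify ring.

Set Implicit Arguments.
Unset Strict Implicit.
Unset Printing Implicit Defensive.
Import Order.TTheory GRing.Theory Num.Theory.
Local Open Scope ring_scope.

(* The unitary divisors of [n] are the products of its primary parts
   [p ^ logn p n], so [(j, n)_* = 1] exactly when no primary part of [n]
   divides [j].  For a prime power [n] this leaves all nonzero residues, and
   [Phistar n = 1 + x + ... + x^(n-1)].  For [n = P * Q] with coprime primary
   parts, inclusion-exclusion over the [n]-th roots of unity gives
   [Phistar n * (x^P - 1) * (x^Q - 1) = (x^n - 1) * (x - 1)], so below degree
   [n] the polynomial [Phistar n] agrees with [(1 - x) * G * H], where
   [G = sum_(i < Q) x^(P i)] and [H = sum_(j < P) x^(Q j)].  By coprimality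
   the exponents [P i + Q j] are pairwise distinct, so [G * H] has 0/1
   coefficients and those of [Phistar n] are differences of two of them. *)

Definition unitary_coprime (n j : nat) : bool :=
  all (fun p => ~~ (p ^ logn p n %| j))%N (primes n).

Lemma ugcd_gt0 j n : (0 < n)%N -> (0 < ugcd j n)%N.
Proof.
move=> n_gt0; apply: (@leq_bigmax_seq _ _ _ id 1%N).
  by rewrite mem_index_iota.
by rewrite dvd1n /unitary_div dvd1n coprime1n.
Qed.

Lemma ugcd_eq1P j n : (0 < n)%N ->
  reflect (forall d, (d %| j)%N -> unitary_div d n -> (d <= 1)%N)
          (ugcd j n == 1%N).
Proof.
move=> n_gt0; rewrite eqn_leq ugcd_gt0 // andbT.
apply: (iffP (bigmax_leqP_seq _ _ _ _)) => le_d1 d.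
  move=> dvd_dj /[dup] ud /andP[dvd_dn _]; apply: le_d1; last by rewrite dvd_dj.
  by rewrite mem_index_iota /= ltnS dvdn_leq.
by move=> _ /andP[]; apply: le_d1.
Qed.

Lemma unitary_div_pfactor p n : unitary_div (p ^ logn p n) n.
Proof.
have [->|n_gt0] := posnP n; first by rewrite logn0.
have [p_pr|/negbTE p_npr] := boolP (prime p); last first.
  by rewrite lognE p_npr /unitary_div dvd1n coprime1n.
rewrite /unitary_div pfactor_dvdnn /=.
have [m cop_pm {2}->] := pfactor_coprime p_pr n_gt0.
by rewrite mulnK ?expn_gt0 ?prime_gt0 // coprimeXl.
Qed.

Lemma pfactor_dvd_unitary_div p d n : (p %| d)%N -> unitary_div d n ->
  (p ^ logn p n %| d)%N.
Proof.
move=> dvd_pd /andP[dvd_dn cop_d]; have [->|n_gt0] := posnP n.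
  by rewrite logn0 dvd1n.
have cop_p : coprime (p ^ logn p n) (n %/ d).
  by rewrite coprimeXl // (coprime_dvdl dvd_pd cop_d).
by rewrite -(Gauss_dvdl _ cop_p) mulnC divnK // pfactor_dvdnn.
Qed.

Lemma ugcd_eq1E j n : (0 < n)%N -> (ugcd j n == 1%N) = unitary_coprime n j.
Proof.
move=> n_gt0; apply/(@ugcd_eq1P j n n_gt0)/allP => [le_d1 p | ndvd d dvd_dj ud].
  rewrite mem_primes => /and3P[p_pr _ dvd_pn]; apply: contraTN isT => dvd_j.
  have := le_d1 _ dvd_j (unitary_div_pfactor p n).
  rewrite leqNgt -{1}(expn0 p) ltn_exp2l ?prime_gt1 // logn_gt0 mem_primes.
  by rewrite p_pr n_gt0 dvd_pn.
rewrite leqNgt; apply/negP => /[dup] d_gt1 /pdiv_prime pd_pr.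
have dvd_pd := pdiv_dvd d.
have pd_n : pdiv d \in primes n.
  by rewrite mem_primes pd_pr n_gt0; case/andP: ud => /(dvdn_trans dvd_pd).
move/negP: (ndvd _ pd_n); apply.
exact: dvdn_trans (pfactor_dvd_unitary_div dvd_pd ud) dvd_dj.
Qed.

Lemma unitary_coprimeN n j : (1 < n)%N -> (n %| j)%N -> ~~ unitary_coprime n j.
Proof.
move=> n_gt1 dvd_nj; rewrite -has_predC; apply/hasP; exists (pdiv n).
  by rewrite mem_primes pdiv_prime // ltnW // pdiv_dvd.
by rewrite /= negbK (dvdn_trans (pfactor_dvdnn _ _) dvd_nj).
Qed.

Lemma big_nat_dvdn_mul (R : Type) (idx : R) (op : Monoid.law idx) m d
    (F : nat -> R) : (0 < d)%N ->
  \big[op/idx]_(0 <= j < m * d | (d %| j)%N) F j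
    = \big[op/idx]_(0 <= t < m) F (t * d)%N.
Proof.
move=> d_gt0; elim: m => [|m IHm]; first by rewrite mul0n !big_geq.
rewrite (big_cat_nat _ (n := m * d)) ?leq_mul //= IHm big_nat_recr //=.
congr (op _ _); rewrite mulSn addnC big_ltn_cond; last by rewrite -addn1 leq_add2l.
rewrite dvdn_mull // big_nat_cond big_pred0 ?Monoid.mulm1 // => j.
apply/negbTE/andP => -[/andP[lt_j j_lt]].
rewrite -(subnKC (ltnW lt_j)) dvdn_addr ?dvdn_mull // => /dvdn_leq.
by rewrite subn_gt0 lt_j; lia.
Qed.

Lemma big_nat_shift1 (R : Type) (idx : R) (op : Monoid.law idx) n
    (P : pred nat) (F : nat -> R) : ~~ P 0%N -> ~~ P n ->
  \big[op/idx]_(1 <= j < n.+1 | P j) F j = \big[op/idx]_(0 <= j < n | P j) F j.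
Proof.
move=> P0; case: n => [|n] Pn; first by rewrite !big_geq.
rewrite big_mkcond big_nat_recr //= (negbTE Pn) Monoid.mulm1.
by rewrite [RHS]big_mkcond [RHS]big_ltn //= (negbTE P0) Monoid.mul1m.
Qed.

Lemma zeta_prim_root n : (0 < n)%N -> n.-primitive_root (zeta n).
Proof. by move=> n_gt0; rewrite /zeta; case: C_prim_root_exists; rewrite prednK. Qed.

Definition zeta_factor (n j : nat) : {poly algC} := 'X - (zeta n ^+ j)%:P.

Lemma prod_zeta_factor n : (0 < n)%N ->
  \prod_(0 <= j < n) zeta_factor n j = 'X^n - 1.
Proof. by move=> n_gt0; rewrite -(factor_Xn_sub_1 (zeta_prim_root n_gt0)). Qed.

Lemma prod_zeta_factor_dvdn P Q : (0 < P)%N -> (0 < Q)%N ->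
  \prod_(0 <= j < P * Q | (P %| j)%N) zeta_factor (P * Q) j = 'X^Q - 1.
Proof.
move=> P_gt0 Q_gt0; have PQ_gt0 : (0 < P * Q)%N by rewrite muln_gt0 P_gt0.
have := dvdn_prim_root (zeta_prim_root PQ_gt0) (dvdn_mull P (dvdnn Q)).
rewrite mulnK // => zetaP_prim.
rewrite {1}mulnC big_nat_dvdn_mul // -(factor_Xn_sub_1 zetaP_prim).
by apply: eq_bigr => t _; rewrite /zeta_factor -exprM [(t * P)%N]mulnC.
Qed.

Lemma Phistar_unitary_coprime n : (1 < n)%N ->
  Phistar n = \prod_(0 <= j < n | unitary_coprime n j) zeta_factor n j.
Proof.
move=> n_gt1; rewrite /Phistar (eq_bigl (unitary_coprime n)) => [|j].
  by rewrite big_nat_shift1 // unitary_coprimeN ?dvdn0.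
by rewrite ugcd_eq1E // ltnW.
Qed.

Lemma size_Phistar n : (1 < n)%N -> (size (Phistar n) <= n)%N.
Proof.
move=> n_gt1; have /negbTE nc0 := unitary_coprimeN n_gt1 (dvdn0 n).
rewrite Phistar_unitary_coprime // -big_filter size_prod_XsubC.
case: n n_gt1 nc0 => // n _ nc0; rewrite /index_iota subn0 /= nc0.
by rewrite ltnS size_filter (leq_trans (count_size _ _)) // size_iota.
Qed.

Lemma prod_zeta_factor_dvdn_id n : (0 < n)%N ->
  \prod_(0 <= j < n | (n %| j)%N) zeta_factor n j = 'X - 1.
Proof.
by move=> n_gt0; have := @prod_zeta_factor_dvdn n 1 n_gt0 isT; rewrite muln1.
Qed.

Lemma prod_zeta_factor_ndvdn n : (0 < n)%N ->
  ('X - 1) * \prod_(0 <= j < n | ~~ (n %| j)%N) zeta_factor n j = 'X^n - 1.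
Proof.
move=> n_gt0; rewrite -(prod_zeta_factor_dvdn_id n_gt0) -(prod_zeta_factor n_gt0).
by rewrite [RHS](bigID (fun j => n %| j)%N).
Qed.

Lemma prod_zeta_factor_coprime P Q : (0 < P)%N -> (0 < Q)%N -> coprime P Q ->
  \prod_(0 <= j < P * Q | ~~ (P %| j)%N && ~~ (Q %| j)%N) zeta_factor (P * Q) j
    * ('X^P - 1) * ('X^Q - 1) = ('X^(P * Q) - 1) * ('X - 1).
Proof.
move=> P_gt0 Q_gt0 cop_PQ; set F := zeta_factor (P * Q).
have prodP : \prod_(0 <= j < P * Q | (P %| j)%N) F j = 'X^Q - 1.
  exact: prod_zeta_factor_dvdn.
have prodQ : \prod_(0 <= j < P * Q | (Q %| j)%N) F j = 'X^P - 1.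
  by rewrite /F mulnC prod_zeta_factor_dvdn.
have prodPQ : \prod_(0 <= j < P * Q | (Q %| j)%N && (P %| j)%N) F j = 'X - 1.
  rewrite (eq_bigl (fun j => P * Q %| j)%N) => [|j].
    by rewrite prod_zeta_factor_dvdn_id ?muln_gt0 ?P_gt0.
  by rewrite Gauss_dvd // andbC.
set R := \prod_(0 <= j < P * Q | ~~ (P %| j)%N && ~~ (Q %| j)%N) F j.
set S := \prod_(0 <= j < P * Q | ~~ (P %| j)%N && (Q %| j)%N) F j.
have splitPQ : 'X^(P * Q) - 1 = ('X^Q - 1) * (S * R).
  rewrite -prod_zeta_factor ?muln_gt0 ?P_gt0 // (bigID (fun j => P %| j)%N) prodP.
  by rewrite (bigID (fun j => Q %| j)%N).
have splitQ : 'X^P - 1 = ('X - 1) * S.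
  by rewrite -prodQ (bigID (fun j => P %| j)%N) /= prodPQ; congr (_ * _);
     apply: eq_bigl => j; rewrite andbC.
by rewrite splitPQ splitQ; ring.
Qed.

Definition expsum (R : nzRingType) (P Q : nat) : {poly R} := \sum_(i < Q) 'X^P ^+ i.

Lemma Xn_sub1_expsum (R : comNzRingType) P Q :
  'X^(P * Q) - 1 = ('X^P - 1) * expsum R P Q.
Proof. by rewrite exprM subrX1. Qed.

Lemma eq_lincomb_coprime P Q i j i' j' : coprime P Q -> (i < Q)%N -> (i' < Q)%N ->
  (P * i + Q * j = P * i' + Q * j')%N -> i = i' /\ j = j'.
Proof.
move=> cop_PQ lt_iQ lt_i'Q E.
have Q_gt0 : (0 < Q)%N := leq_ltn_trans (leq0n i) lt_iQ.
suff eq_ii' : i = i'.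
  split=> //; move: E; rewrite eq_ii' => /addnI/eqP.
  by rewrite eqn_pmul2l // => /eqP.
wlog le_ii' : i j i' j' lt_iQ lt_i'Q E / (i <= i')%N.
  move=> W; case: (leqP i i') => [|/ltnW] le; first exact: W lt_iQ lt_i'Q E le.
  exact/esym/(W i' j' i j lt_i'Q lt_iQ (esym E) le).
have eq_diff : (P * (i' - i) = Q * (j - j'))%N by rewrite !mulnBr; lia.
have : (Q %| i' - i)%N.
  by rewrite -(@Gauss_dvdr Q P) 1?coprime_sym // eq_diff dvdn_mulr.
by have [? _ | pos /(dvdn_leq pos)] := posnP (i' - i); lia.
Qed.

Lemma coef_expsum_mul (R : nzRingType) P Q m : coprime P Q ->
  (expsum R P Q * expsum R Q P)`_m
    = [exists ij : 'I_Q * 'I_P, m == P * ij.1 + Q * ij.2]%N%:R.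
Proof.
move=> cop_PQ; rewrite big_distrlr pair_big coef_sum /=.
under eq_bigr => ij _ do rewrite -!exprM -exprD coefXn.
case: existsP => [[[i0 j0] /= /eqP->] | no_ij]; last first.
  rewrite big1 // => ij _; case: eqP => // m_eq.
  by case: no_ij; exists ij; rewrite m_eq.
rewrite (bigD1 (i0, j0)) //= eqxx big1 ?addr0 // => -[i j] /= ne_ij.
case: eqP => // E; case/negP: ne_ij.
by have [/val_inj-> /val_inj->] :=
  eq_lincomb_coprime cop_PQ (ltn_ord i0) (ltn_ord i) E.
Qed.

Lemma Xn_sub1_neq0 (R : idomainType) n : (0 < n)%N -> ('X^n - 1 : {poly R}) != 0.
Proof. by move=> n_gt0; rewrite -polyC1 monic_neq0 // monicXnsubC. Qed.

Lemma coef_binary (R : idomainType) (Phi : {poly R}) P Q m :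
    (0 < P)%N -> Phi * ('X^P - 1) * ('X^Q - 1) = ('X^(P * Q) - 1) * ('X - 1) ->
    (m < P * Q)%N ->
  Phi`_m = (expsum R P Q * expsum R Q P * (1 - 'X))`_m.
Proof.
move=> P_gt0 Phi_eq lt_m; set G := expsum R P Q; set H := expsum R Q P.
have PhiQ : Phi * ('X^Q - 1) = G * ('X - 1).
  apply: (mulfI (Xn_sub1_neq0 R P_gt0)); rewrite mulrA [_ * Phi]mulrC Phi_eq.
  by rewrite Xn_sub1_expsum -/G mulrA.
have PhiPQ : Phi * ('X^(Q * P) - 1) = G * H * ('X - 1).
  by rewrite Xn_sub1_expsum -/H mulrA PhiQ; ring.
have /(congr1 (coefp m)) := PhiPQ; rewrite mulnC /= mulrBr mulr1 coefB coefMXn lt_m.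
by rewrite sub0r -opprB mulrN coefN => /oppr_inj.
Qed.

Lemma norm_natb_sub (R : numDomainType) (b c : bool) : `|b%:R - c%:R : R| <= 1.
Proof. by case: b; case: c; rewrite ?subrr ?subr0 ?sub0r ?normrN ?normr1 ?normr0. Qed.

Lemma height_binary (Phi : {poly algC}) P Q :
    (0 < P)%N -> (0 < Q)%N -> coprime P Q ->
    Phi * ('X^P - 1) * ('X^Q - 1) = ('X^(P * Q) - 1) * ('X - 1) ->
    (size Phi <= P * Q)%N ->
  height_eq Phi 1.
Proof.
move=> P_gt0 Q_gt0 cop_PQ Phi_eq size_Phi.
have coefE m : (m < P * Q)%N -> Phi`_m
    = [exists ij : 'I_Q * 'I_P, m == P * ij.1 + Q * ij.2]%N%:R
      - ((if m is m'.+1 then [exists ij : 'I_Q * 'I_P, m' == P * ij.1 + Q * ij.2]%N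
          else false) : bool)%:R.
  move=> lt_m; rewrite (coef_binary P_gt0 Phi_eq lt_m) mulrBr mulr1 coefB coefMX.
  by case: m lt_m => [|m] _; rewrite /= !coef_expsum_mul.
have PQ_gt0 : (0 < P * Q)%N by rewrite muln_gt0 P_gt0.
split=> [m | ]; first case: (ltnP m (P * Q)) => [lt_m | le_m].
- by rewrite coefE // norm_natb_sub.
- by rewrite nth_default ?normr0 ?ler01 // (leq_trans size_Phi le_m).
exists 0%N; rewrite coefE //; set b := [exists _, _].
have -> : b.
  by apply/existsP; exists (Ordinal Q_gt0, Ordinal P_gt0); rewrite /= !muln0.
by rewrite subr0 normr1.
Qed.

Lemma prod_pfactors n : (0 < n)%N -> (\prod_(p <- primes n) p ^ logn p n)%N = n.
Proof. by move=> n_gt0; rewrite [RHS]prod_prime_decomp // prime_decompE big_map. Qed.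

Lemma primes_cons_gt1 n p s : primes n = p :: s -> (1 < n)%N.
Proof. by move=> primes_n; rewrite ltnNge -ltnS -primes_eq0 primes_n. Qed.

Lemma Phistar1 : Phistar 1 = 'X - 1.
Proof.
have zeta1 : zeta 1 = 1 by rewrite -[zeta 1]expr1 prim_expr_order // zeta_prim_root.
by rewrite /Phistar big_mkcond big_nat1 ugcd_eq1E // expr1 zeta1.
Qed.

Lemma Phistar_pfactor n p : primes n = [:: p] -> Phistar n = \poly_(i < n) 1.
Proof.
move=> primes_n; have n_gt1 := primes_cons_gt1 primes_n; have n_gt0 := ltnW n_gt1.
have ucE j : unitary_coprime n j = ~~ (n %| j)%N.
  rewrite /unitary_coprime primes_n /= andbT.
  by rewrite -{2}(prod_pfactors n_gt0) primes_n big_seq1.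
apply: (mulfI (Xn_sub1_neq0 _ (ltn0Sn 0))); rewrite expr1 poly_def.
under eq_bigr do rewrite scale1r.
rewrite -subrX1 Phistar_unitary_coprime // (eq_bigl _ _ ucE).
exact: prod_zeta_factor_ndvdn.
Qed.

Lemma height_Phistar_binary n p q : primes n = [:: p; q] ->
  height_eq (Phistar n) 1.
Proof.
move=> primes_n; have n_gt1 := primes_cons_gt1 primes_n; have n_gt0 := ltnW n_gt1.
set P := (p ^ logn p n)%N; set Q := (q ^ logn q n)%N.
have nE : (P * Q)%N = n by rewrite -[RHS]prod_pfactors // primes_n big_cons big_seq1.
have /and3P[p_pr q_pr _] : all prime [:: p; q].
  by rewrite -primes_n all_prime_primes.
have /andP[p_nq _] : uniq [:: p; q] by rewrite -primes_n primes_uniq.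
have P_gt0 : (0 < P)%N by rewrite expn_gt0 prime_gt0.
have Q_gt0 : (0 < Q)%N by rewrite expn_gt0 prime_gt0.
have cop_PQ : coprime P Q.
  by rewrite coprimeXl // coprimeXr // prime_coprime // dvdn_prime2 // -mem_seq1.
have PhiE : Phistar n
    = \prod_(0 <= j < P * Q | ~~ (P %| j)%N && ~~ (Q %| j)%N) zeta_factor (P * Q) j.
  by rewrite nE Phistar_unitary_coprime //; apply: eq_bigl => j;
     rewrite /unitary_coprime primes_n /= andbT.
apply: (height_binary P_gt0 Q_gt0 cop_PQ); last by rewrite nE size_Phistar.
by rewrite PhiE prod_zeta_factor_coprime.
Qed.

Lemma height_XsubC1 : height_eq ('X - 1) 1.
Proof.
have coefE i : ('X - 1 : {poly algC})`_i = (i == 1%N)%:R - (i == 0%N)%:R.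
  by rewrite coefB coefX coef1.
split=> [i | ]; first by rewrite coefE norm_natb_sub.
by exists 0%N; rewrite coefE sub0r normrN normr1.
Qed.

Lemma height_poly1 n : (0 < n)%N -> height_eq (\poly_(i < n) 1) 1.
Proof.
move=> n_gt0; split=> [i | ]; last by exists 0%N; rewrite coef_poly n_gt0 normr1.
by rewrite coef_poly; case: ifP; rewrite ?normr1 ?normr0 ?ler01.
Qed.

Lemma kappa_squarefree k : (0 < k)%N -> squarefree k -> kappa k = k.
Proof.
move=> k_gt0 sqf_k; rewrite -[RHS]prod_pfactors //; apply: eq_big_seq => p.
rewrite mem_primes => /and3P[p_pr _ dvd_pk].
have : (logn p k < 2)%N by rewrite ltnNge -(pfactor_dvdn 2 p_pr k_gt0) sqf_k.
have : (0 < logn p k)%N by rewrite logn_gt0 mem_primes p_pr k_gt0.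
by case: (logn p k) => [|[|]].
Qed.

Lemma size_primes_kappa n : (size (primes n) <= size (primes (kappa n)))%N.
Proof.
have kappa_gt0 : (0 < kappa n)%N.
  rewrite /kappa big_seq_cond prodn_cond_gt0 // => p.
  by rewrite andbT mem_primes => /and3P[/prime_gt0].
apply: uniq_leq_size (primes_uniq n) _ => p p_n.
rewrite mem_primes kappa_gt0 /kappa (big_rem _ p_n) /= dvdn_mulr // andbT.
by move: p_n; rewrite mem_primes => /andP[].
Qed.

Theorem lemma5p4 (k : nat) :
  (0 < k)%N -> squarefree k -> (size (primes k) <= 2)%N ->
  (exists n : nat, (0 < n)%N /\ kappa n = k) /\
  (forall n : nat, (0 < n)%N -> kappa n = k -> height_eq (Phistar n) 1).
Proof.
move=> k_gt0 sqf_k primes_k; split; first by exists k; rewrite kappa_squarefree.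
move=> n n_gt0 kappa_n; move: (size_primes_kappa n); rewrite kappa_n.
move=> /leq_trans/(_ primes_k); case primes_n: (primes n) => [|p [|q [|]]] // _.
- have -> : n = 1%N by apply/eqP; rewrite eqn_leq n_gt0 -ltnS -primes_eq0 primes_n.
  by rewrite Phistar1; apply: height_XsubC1.
- by rewrite (Phistar_pfactor primes_n); apply: height_poly1.
- exact: height_Phistar_binary primes_n.
Qed.
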